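(* Let $A$ be a unital C*-algebra such that $\mathcal C(A)$ satisfies the ascending chain condition: every chain $C_1\subseteq C_2\subseteq C_3\subseteq\cdots$ in $\mathcal C(A)$ stabilizes. Then the topological space $\Sigma_\ast$ is sober (every nonempty irreducible closed subset is the closure of a unique point). In particular, $\Sigma_\ast$ is sober whenever $A$ is finite-dimensional.
   Context: Let $A$ be a unital C*-algebra. $\mathcal C(A)$ is the poset (under inclusion) of commutative C*-subalgebras of $A$ containing the unit of $A$. For $C\in\mathcal C(A)$, $\Sigma_C$ is its Gelfand spectrum; for $C\subseteq C'$ and $\lambda'\in\Sigma_{C'}$, $\lambda'|_C$ is the restriction. Let $\Sigma=\{(C,\lambda)\mid C\in\mathcal C(A),\lambda\in\Sigma_C\}$ and $U_C=\{\lambda\mid(C,\lambda)\in U\}$ for $U\subseteq\Sigma$. The space $\Sigma_\ast$ is $\Sigma$ with the topology in which $U$ is open iff (1) each $U_C$ is open in $\Sigma_C$, and (2) if $\lambda\in U_C$, $C\subseteq C'$ and $\lambda'\in\Sigma_{C'}$ with $\lambda'|_C=\lambda$, then $\lambda'\in U_{C'}$. *)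

From Stdlib Require Import Reals List.
Open Scope R_scope.

Record Cx : Type := mkC { re : R; im : R }.
Definition C0 : Cx := mkC 0 0.
Definition C1 : Cx := mkC 1 0.
Definition Cadd (z w : Cx) : Cx := mkC (re z + re w) (im z + im w).
Definition Copp (z : Cx) : Cx := mkC (- re z) (- im z).
Definition Cmul (z w : Cx) : Cx :=
  mkC (re z * re w - im z * im w) (re z * im w + im z * re w).
Definition Cconj (z : Cx) : Cx := mkC (re z) (- im z).
Definition Cnorm (z : Cx) : R := sqrt (re z * re z + im z * im z).

Record CstarAlg : Type := {
  car :> Type;
  a0 : car; a1 : car;
  aadd : car -> car -> car;
  aopp : car -> car;
  amul : car -> car -> car;
  asmul : Cx -> car -> car;
  astar : car -> car;
  anorm : car -> R;
  aaddA : forall x y z, aadd x (aadd y z) = aadd (aadd x y) z;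
  aaddC : forall x y, aadd x y = aadd y x;
  aadd0 : forall x, aadd x a0 = x;
  aaddN : forall x, aadd x (aopp x) = a0;
  asmulA : forall a b x, asmul (Cmul a b) x = asmul a (asmul b x);
  asmul1 : forall x, asmul C1 x = x;
  asmulDr : forall a x y, asmul a (aadd x y) = aadd (asmul a x) (asmul a y);
  asmulDl : forall a b x, asmul (Cadd a b) x = aadd (asmul a x) (asmul b x);
  amulA : forall x y z, amul x (amul y z) = amul (amul x y) z;
  amul1l : forall x, amul a1 x = x;
  amul1r : forall x, amul x a1 = x;
  amulDl : forall x y z, amul (aadd x y) z = aadd (amul x z) (amul y z);
  amulDr : forall x y z, amul x (aadd y z) = aadd (amul x y) (amul x z);
  asmul_mull : forall a x y, asmul a (amul x y) = amul (asmul a x) y;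
  asmul_mulr : forall a x y, asmul a (amul x y) = amul x (asmul a y);
  astarD : forall x y, astar (aadd x y) = aadd (astar x) (astar y);
  astarZ : forall a x, astar (asmul a x) = asmul (Cconj a) (astar x);
  astarM : forall x y, astar (amul x y) = amul (astar y) (astar x);
  astarK : forall x, astar (astar x) = x;
  anorm_eq0 : forall x, anorm x = 0 -> x = a0;
  anormZ : forall a x, anorm (asmul a x) = Cnorm a * anorm x;
  anorm_triangle : forall x y, anorm (aadd x y) <= anorm x + anorm y;
  anorm_submul : forall x y, anorm (amul x y) <= anorm x * anorm y;
  acomplete : forall u : nat -> car,
    (forall eps, 0 < eps -> exists N, forall m n, (N <= m)%nat -> (N <= n)%nat ->
        anorm (aadd (u m) (aopp (u n))) < eps) ->
    exists l, forall eps, 0 < eps -> exists N, forall n, (N <= n)%nat ->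
        anorm (aadd (u n) (aopp l)) < eps;
  acstar : forall x, anorm (amul (astar x) x) = anorm x * anorm x
}.

Section Defs.
Variable A : CstarAlg.

Definition converges (u : nat -> A) (l : A) : Prop :=
  forall eps, 0 < eps -> exists N, forall n, (N <= n)%nat ->
    anorm A (aadd A (u n) (aopp A l)) < eps.

Definition is_comm_csub (S : A -> Prop) : Prop :=
  S (a1 A) /\
  (forall x y, S x -> S y -> S (aadd A x y)) /\
  (forall a x, S x -> S (asmul A a x)) /\
  (forall x y, S x -> S y -> S (amul A x y)) /\
  (forall x, S x -> S (astar A x)) /\
  (forall u l, (forall n, S (u n)) -> converges u l -> S l) /\
  (forall x y, S x -> S y -> amul A x y = amul A y x).

Definition CSub : Type := { S : A -> Prop | is_comm_csub S }.
Definition mem (C : CSub) (x : A) : Prop := proj1_sig C x.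
Definition csub_le (C C' : CSub) : Prop := forall x, mem C x -> mem C' x.

Definition is_character (C : CSub) (chi : {x : A | mem C x} -> Cx) : Prop :=
  (forall x y (hx : mem C x) (hy : mem C y) (hxy : mem C (aadd A x y)),
      chi (exist _ _ hxy) = Cadd (chi (exist _ _ hx)) (chi (exist _ _ hy))) /\
  (forall a x (hx : mem C x) (hax : mem C (asmul A a x)),
      chi (exist _ _ hax) = Cmul a (chi (exist _ _ hx))) /\
  (forall x y (hx : mem C x) (hy : mem C y) (hxy : mem C (amul A x y)),
      chi (exist _ _ hxy) = Cmul (chi (exist _ _ hx)) (chi (exist _ _ hy))) /\
  (exists x, chi x <> C0).

Definition Spec (C : CSub) : Type :=
  { chi : {x : A | mem C x} -> Cx | is_character C chi }.
Definition ev (C : CSub) (l : Spec C) : {x : A | mem C x} -> Cx := proj1_sig l.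
Arguments ev {C} l x.

Definition open_spec {C : CSub} (U : Spec C -> Prop) : Prop :=
  forall l, U l -> exists (xs : list {x : A | mem C x}) (eps : R), 0 < eps /\
    forall m, (forall x, In x xs -> Cnorm (Cadd (ev m x) (Copp (ev l x))) < eps) -> U m.

Definition restricts {C C' : CSub} (l' : Spec C') (l : Spec C) : Prop :=
  forall x (hx : mem C x) (hx' : mem C' x),
    ev l' (exist _ x hx') = ev l (exist _ x hx).

Definition Sigma : Type := { C : CSub & Spec C }.

Definition open_star (U : Sigma -> Prop) : Prop :=
  (forall C : CSub, open_spec (fun l : Spec C => U (existT _ C l))) /\
  (forall (C C' : CSub) (l : Spec C) (l' : Spec C'),
      U (existT _ C l) -> csub_le C C' -> restricts l' l -> U (existT _ C' l')).

Definition ACC_CA : Prop :=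
  forall c : nat -> CSub, (forall n, csub_le (c n) (c (S n))) ->
    exists N, forall n, (N <= n)%nat -> c n = c N.

Fixpoint lincomb (n : nat) (c : nat -> Cx) (e : nat -> A) : A :=
  match n with
  | O => a0 A
  | S k => aadd A (lincomb k c e) (asmul A (c k) (e k))
  end.

Definition finite_dim : Prop :=
  exists (n : nat) (e : nat -> A), forall a, exists c, a = lincomb n c e.

End Defs.
Arguments open_star {A} U.


Section Topo.
Variable X : Type.
Variable open : (X -> Prop) -> Prop.

Definition closed (F : X -> Prop) : Prop := open (fun x => ~ F x).
Definition closure (S : X -> Prop) (y : X) : Prop :=
  forall F, closed F -> (forall z, S z -> F z) -> F y.
Definition irreducible (F : X -> Prop) : Prop :=
  (exists x, F x) /\
  forall F1 F2, closed F1 -> closed F2 -> (forall x, F x -> F1 x \/ F2 x) ->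
    (forall x, F x -> F1 x) \/ (forall x, F x -> F2 x).
Definition sober : Prop :=
  forall F, closed F -> irreducible F ->
    exists! x : X, forall y, F y <-> closure (fun z => z = x) y.
End Topo.

(* Under the ascending chain condition every nonempty family of commutative
   subalgebras has a maximal member.  Given an irreducible closed set F, pick a
   point (C, l) of F with C maximal among the algebras occurring in F.
   Irreducibility lets any two open sets meeting F be intersected inside F;
   with the upward-closed opens {(E, _) | C ⊆ E} this forces every algebra of F
   into C, and with opens prescribing the value at one element it forces l to
   restrict to every character of F.  Since opens are upward closed, (C, l) lies
   in every open set meeting F, i.e. it is a generic point of F; uniqueness
   holds because Sigma_* is T0.  A finite-dimensional algebra satisfies the
   chain condition since ascending chains of subspaces of a finite span
   stabilize. *)
From Pilot Require Import Defs.
From Stdlib Require Import Reals List Lra Lia.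
From Stdlib Require Import Classical ClassicalEpsilon FunctionalExtensionality.
From Stdlib Require Import PropExtensionality ProofIrrelevance.
Open Scope R_scope.

Ltac Cx_ring := unfold Cadd, Cmul, Copp, C0, Defs.C1; simpl; f_equal; ring.

Definition Cinv (a : Cx) : Cx :=
  mkC (re a / (re a * re a + im a * im a)) (- im a / (re a * re a + im a * im a)).

Lemma Cmul_Cinv_l (a b : Cx) : a <> C0 -> Cmul (Cmul b (Cinv a)) a = b.
Proof.
  intro Ha. destruct a as [ar ai], b as [br bi].
  assert (Hd : ar * ar + ai * ai <> 0).
  { intro Hd. apply Ha. assert (ar = 0) by nra. assert (ai = 0) by nra.
    subst. reflexivity. }
  unfold Cmul, Cinv; simpl. f_equal; field; exact Hd.
Qed.

Definition Cx_open (P : Cx -> Prop) : Prop :=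
  forall w, P w -> exists eps, 0 < eps /\
    forall w', Cnorm (Cadd w' (Copp w)) < eps -> P w'.

Lemma Rabs_le_sqrt (a b : R) : Rabs a <= sqrt (a * a + b * b).
Proof. rewrite <- sqrt_Rsqr_abs. apply sqrt_le_1; unfold Rsqr; nra. Qed.

Lemma Rabs_re_le_Cnorm (w' w : Cx) : Rabs (re w' - re w) <= Cnorm (Cadd w' (Copp w)).
Proof. apply Rabs_le_sqrt. Qed.

Lemma Rabs_im_le_Cnorm (w' w : Cx) : Rabs (im w' - im w) <= Cnorm (Cadd w' (Copp w)).
Proof. unfold Cnorm. rewrite Rplus_comm. apply Rabs_le_sqrt. Qed.

Section CxSeparation.

Variable g : Cx -> R.
Hypothesis g_lipschitz : forall w' w, Rabs (g w' - g w) <= Cnorm (Cadd w' (Copp w)).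

Lemma Cx_open_near (w0 : Cx) (d : R) : Cx_open (fun w => Rabs (g w - g w0) < d).
Proof.
  intros w Hw. exists (d - Rabs (g w - g w0)). split; [lra|].
  intros w' Hw'. pose proof (g_lipschitz w' w).
  pose proof (Rabs_triang (g w' - g w) (g w - g w0)).
  replace (g w' - g w0) with (g w' - g w + (g w - g w0)) by ring. lra.
Qed.

Lemma Cx_separate_by (w1 w2 : Cx) : g w1 <> g w2 ->
  exists P1 P2, Cx_open P1 /\ Cx_open P2 /\ P1 w1 /\ P2 w2 /\
    forall w, P1 w -> P2 w -> False.
Proof.
  intro Hne. set (d := Rabs (g w1 - g w2) / 2).
  assert (Hd : 0 < d).
  { unfold d. assert (0 < Rabs (g w1 - g w2)) by (apply Rabs_pos_lt; lra). lra. }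
  exists (fun w => Rabs (g w - g w1) < d), (fun w => Rabs (g w - g w2) < d).
  repeat split; try apply Cx_open_near.
  - unfold Rminus. rewrite Rplus_opp_r, Rabs_R0. exact Hd.
  - unfold Rminus. rewrite Rplus_opp_r, Rabs_R0. exact Hd.
  - intros w H1 H2. pose proof (Rabs_triang (g w1 - g w) (g w - g w2)).
    rewrite Rabs_minus_sym in H1.
    replace (g w1 - g w + (g w - g w2)) with (g w1 - g w2) in * by ring.
    unfold d in *. lra.
Qed.

End CxSeparation.

Lemma Cx_separate (w1 w2 : Cx) : w1 <> w2 ->
  exists P1 P2, Cx_open P1 /\ Cx_open P2 /\ P1 w1 /\ P2 w2 /\
    forall w, P1 w -> P2 w -> False.
Proof.
  intro Hne. destruct (Req_dec (re w1) (re w2)) as [Hre|Hre].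
  - apply (Cx_separate_by im); [exact Rabs_im_le_Cnorm|].
    intro Him. apply Hne. destruct w1, w2; simpl in *; subst; reflexivity.
  - exact (Cx_separate_by re Rabs_re_le_Cnorm w1 w2 Hre).
Qed.

Definition chain {T : Type} (c : nat -> T -> Prop) : Prop :=
  forall k x, c k x -> c (S k) x.

Definition stabilizes {T : Type} (c : nat -> T -> Prop) : Prop :=
  exists N, forall k, (N <= k)%nat -> forall x, c k x -> c N x.

Lemma chain_le {T : Type} (c : nat -> T -> Prop) : chain c ->
  forall i j x, (i <= j)%nat -> c i x -> c j x.
Proof. intros Hc i j x Hij. induction Hij; auto. Qed.

Lemma Cx_scaling_chain (P : nat -> Cx -> Prop) : chain P ->
  (forall k t a, P k a -> P k (Cmul t a)) ->
  exists N0, forall N k a, (N0 <= N)%nat -> (N <= k)%nat -> a <> C0 -> P k a -> P N a.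
Proof.
  intros HP Hscale.
  destruct (classic (exists k0 b, b <> C0 /\ P k0 b)) as [[k0 [b [Hb Hk0]]] | Hnone].
  - exists k0. intros N k a HN _ _ _.
    rewrite <- (Cmul_Cinv_l b a Hb). apply Hscale. exact (chain_le P HP k0 N b HN Hk0).
  - exists 0%nat. intros N k a _ _ Ha Hk. exfalso. apply Hnone. eauto.
Qed.

Section LinearAlgebra.

Variable A : CstarAlg.

Lemma asmul0l (x : A) : asmul A C0 x = a0 A.
Proof.
  set (s := asmul A C0 x).
  assert (Hss : aadd A s s = s).
  { unfold s. rewrite <- asmulDl. f_equal. Cx_ring. }
  transitivity (aadd A (aadd A s s) (aopp A s)).
  - rewrite <- aaddA, aaddN, aadd0. reflexivity.
  - rewrite Hss, aaddN. reflexivity.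
Qed.

Lemma asmul0r (a : Cx) : asmul A a (a0 A) = a0 A.
Proof.
  rewrite <- (asmul0l (a0 A)) at 1. rewrite <- asmulA.
  replace (Cmul a C0) with C0 by Cx_ring. apply asmul0l.
Qed.

Lemma asmulN1 (x : A) : asmul A (Copp Defs.C1) x = aopp A x.
Proof.
  assert (Hx : aadd A (asmul A (Copp Defs.C1) x) x = a0 A).
  { rewrite <- (asmul1 A x) at 2. rewrite <- asmulDl.
    replace (Cadd (Copp Defs.C1) Defs.C1) with C0 by Cx_ring. apply asmul0l. }
  rewrite <- (aadd0 A (asmul A _ x)), <- (aaddN A x), aaddA, Hx, aaddC, aadd0.
  reflexivity.
Qed.

Lemma aaddACA (x y z w : A) :
  aadd A (aadd A x y) (aadd A z w) = aadd A (aadd A x z) (aadd A y w).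
Proof. rewrite <- !aaddA. f_equal. rewrite !aaddA. f_equal. apply aaddC. Qed.

Lemma aaddNK (x y : A) : aadd A (aadd A x (aopp A y)) y = x.
Proof. rewrite <- aaddA, (aaddC A (aopp A y)), aaddN, aadd0. reflexivity. Qed.

Definition is_subspace (P : A -> Prop) : Prop :=
  P (a0 A) /\ (forall x y, P x -> P y -> P (aadd A x y)) /\
  (forall a x, P x -> P (asmul A a x)).

Lemma subspace_opp (P : A -> Prop) (x : A) : is_subspace P -> P x -> P (aopp A x).
Proof. intros [_ [_ HZ]] Hx. rewrite <- asmulN1. auto. Qed.

Lemma subspaceI (P Q : A -> Prop) :
  is_subspace P -> is_subspace Q -> is_subspace (fun x => P x /\ Q x).
Proof.
  intros [P0 [PD PZ]] [Q0 [QD QZ]].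
  split; [|split]; [split | intros x y [? ?] [? ?]; split | intros t x [? ?]; split]; auto.
Qed.

Variable e : nat -> A.

Definition span (m : nat) (x : A) : Prop := exists c, x = lincomb A m c e.

Lemma span_subspace (m : nat) : is_subspace (span m).
Proof.
  split; [|split].
  - exists (fun _ => C0). induction m as [|m IH]; simpl; [reflexivity|].
    rewrite <- IH, asmul0l, aadd0. reflexivity.
  - intros x y [c ->] [d ->]. exists (fun i => Cadd (c i) (d i)).
    induction m as [|m IH]; simpl.
    + rewrite aadd0. reflexivity.
    + rewrite asmulDl, <- IH, aaddACA. reflexivity.
  - intros t x [c ->]. exists (fun i => Cmul t (c i)).
    induction m as [|m IH]; simpl.
    + rewrite asmul0r. reflexivity.
    + rewrite asmulDr, <- IH, asmulA. reflexivity.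
Qed.

Lemma span_S (m : nat) (x : A) : span (S m) x ->
  exists w a, span m w /\ x = aadd A w (asmul A a (e m)).
Proof. intros [d ->]. exists (lincomb A m d e), (d m). split; [exists d|]; reflexivity. Qed.

Section ChainStep.

Variables (m : nat) (c : nat -> A -> Prop).
Hypotheses (c_subspace : forall k, is_subspace (c k)) (c_chain : chain c)
  (c_span : forall k x, c k x -> span (S m) x).

Definition leading (k : nat) (a : Cx) : Prop :=
  exists w, span m w /\ c k (aadd A w (asmul A a (e m))).

Lemma leading_chain : chain leading.
Proof. intros k a [w [Hw Hk]]. exists w. auto. Qed.

Lemma leading_scale (k : nat) (t a : Cx) : leading k a -> leading k (Cmul t a).
Proof.
  intros [w [Hw Hk]]. exists (asmul A t w). split.
  - apply span_subspace, Hw.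
  - rewrite asmulA, <- asmulDr. apply c_subspace, Hk.
Qed.

(* Two vectors of [c k] with the same coefficient of [e m] differ by a vector of [span m]. *)
Lemma chain_stable_of_parts (N1 N : nat) : (N1 <= N)%nat ->
  (forall k, (N1 <= k)%nat -> forall x, c k x -> span m x -> c N1 x) ->
  (forall k a, (N <= k)%nat -> a <> C0 -> leading k a -> leading N a) ->
  forall k, (N <= k)%nat -> forall x, c k x -> c N x.
Proof.
  intros HN1N Hlow Htop k Hk v Hv.
  destruct (span_S m v (c_span k v Hv)) as [w [a [Hw ->]]].
  destruct (classic (a = C0)) as [-> | Ha].
  - rewrite asmul0l, aadd0 in *. apply (chain_le c c_chain N1 N); auto.
    apply (Hlow k); [lia | auto | auto].
  - destruct (Htop k a Hk Ha) as [w' [Hw' HuN]]; [exists w; auto|].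
    set (u := aadd A w' (asmul A a (e m))) in HuN.
    set (v := aadd A w (asmul A a (e m))) in Hv |- *.
    assert (Hdiff : aadd A v (aopp A u) = aadd A w (aopp A w')).
    { unfold u, v. rewrite <- !asmulN1, asmulDr, aaddACA, asmulN1, asmulN1, aaddN, aadd0.
      reflexivity. }
    assert (HdiffN : c N (aadd A v (aopp A u))).
    { apply (chain_le c c_chain N1 N); auto. apply (Hlow k); [lia| |].
      - apply c_subspace; [exact Hv|]. apply subspace_opp; [apply c_subspace|].
        exact (chain_le c c_chain N k u Hk HuN).
      - rewrite Hdiff. apply span_subspace; [exact Hw|].
        apply subspace_opp; [apply span_subspace | exact Hw']. }
    rewrite <- (aaddNK v u). apply c_subspace; assumption.
Qed.

End ChainStep.

Lemma subspace_chain_stabilizes (m : nat) : forall c : nat -> A -> Prop,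
  (forall k, is_subspace (c k)) -> chain c -> (forall k x, c k x -> span m x) ->
  stabilizes c.
Proof.
  induction m as [|m IH]; intros c Hsub Hc Hspan.
  - exists 0%nat. intros k _ x Hx. destruct (Hspan k x Hx) as [d ->]. apply Hsub.
  - destruct (IH (fun k x => c k x /\ span m x)) as [N1 HN1].
    + intro k. apply subspaceI; [apply Hsub | apply span_subspace].
    + intros k x [Hx Hxm]. split; auto.
    + intros k x [_ Hxm]. exact Hxm.
    + destruct (Cx_scaling_chain (leading m c) (leading_chain m c Hc)
                  (leading_scale m c Hsub)) as [N0 HN0].
      exists (Nat.max N1 N0).
      apply (chain_stable_of_parts m c Hsub Hc Hspan N1); [lia| |].
      * intros k Hk x Hx Hxm. apply (HN1 k Hk x). auto.
      * intros k a Hk. apply HN0; lia.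
Qed.

End LinearAlgebra.

Lemma csub_ext (A : CstarAlg) (C D : CSub A) : csub_le A C D -> csub_le A D C -> C = D.
Proof.
  destruct C as [P hP], D as [Q hQ]. unfold csub_le, mem; simpl. intros H1 H2.
  assert (P = Q).
  { apply functional_extensionality; intro x. apply propositional_extensionality; split; auto. }
  subst Q. f_equal. apply proof_irrelevance.
Qed.

Lemma finite_dim_ACC (A : CstarAlg) : finite_dim A -> ACC_CA A.
Proof.
  intros [n [e He]] cc Hcc.
  destruct (subspace_chain_stabilizes A e n (fun k => proj1_sig (cc k))) as [N HN].
  - intro k. destruct (proj2_sig (cc k)) as [H1 [HD [HZ _]]].
    split; [|split]; auto. rewrite <- (asmul0l A (a1 A)). auto.
  - exact Hcc.
  - intros k x _. apply He.
  - exists N. intros k Hk. apply csub_ext.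
    + exact (HN k Hk).
    + intro x. exact (chain_le (fun k => proj1_sig (cc k)) Hcc N k x Hk).
Qed.

Section Maximal.

Variables (T : Type) (le : T -> T -> Prop).
Hypothesis le_refl : forall x, le x x.
Hypothesis le_acc : forall c : nat -> T, (forall n, le (c n) (c (S n))) ->
  exists N, forall n, (N <= n)%nat -> c n = c N.

(* Otherwise a strictly increasing sequence could be chosen step by step. *)
Lemma acc_maximal (P : T -> Prop) : (exists x, P x) ->
  exists x, P x /\ forall y, P y -> le x y -> le y x.
Proof.
  intros [x0 Hx0]. apply NNPP. intro Hno.
  assert (Hstep : forall p : {x | P x}, exists q : {x | P x},
    le (proj1_sig p) (proj1_sig q) /\ ~ le (proj1_sig q) (proj1_sig p)).
  { intros [x Hx]. apply NNPP. intro H. apply Hno. exists x. split; [exact Hx|].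
    intros y Hy Hxy. apply NNPP. intro Hyx. apply H. exists (exist _ y Hy). auto. }
  pose (next p := proj1_sig (constructive_indefinite_description _ (Hstep p))).
  pose (c n := proj1_sig (Nat.iter n next (exist _ x0 Hx0))).
  assert (Hnext : forall p, le (proj1_sig p) (proj1_sig (next p)) /\
                            ~ le (proj1_sig (next p)) (proj1_sig p)).
  { intro p. unfold next. destruct (constructive_indefinite_description _ _) as [q Hq].
    exact Hq. }
  destruct (le_acc c) as [N HN].
  - intro n. apply Hnext.
  - apply (proj2 (Hnext (Nat.iter N next (exist _ x0 Hx0)))).
    change (le (c (S N)) (c N)). rewrite (HN (S N)); [apply le_refl | lia].
Qed.

End Maximal.

Section GeneralTopology.

Variables (X : Type) (open : (X -> Prop) -> Prop).
Hypothesis open_ext : forall U V, (forall x, U x <-> V x) -> open U -> open V.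

Lemma closed_compl (U : X -> Prop) : open U -> closed X open (fun x => ~ U x).
Proof.
  apply open_ext. intro x. split; [tauto | apply NNPP].
Qed.

Lemma irreducible_meet (F U V : X -> Prop) : irreducible X open F -> open U -> open V ->
  (exists x, F x /\ U x) -> (exists y, F y /\ V y) -> exists z, F z /\ U z /\ V z.
Proof.
  intros [_ Hirr] HU HV [x [Fx Ux]] [y [Fy Vy]]. apply NNPP. intro Hno.
  destruct (Hirr (fun z => ~ U z) (fun z => ~ V z)) as [H|H].
  - apply closed_compl, HU.
  - apply closed_compl, HV.
  - intros z Fz. destruct (classic (U z)); [|auto]. destruct (classic (V z)); [|auto].
    exfalso. eauto.
  - exact (H x Fx Ux).
  - exact (H y Fy Vy).
Qed.

Definition specializes (x y : X) : Prop := forall U, open U -> U y -> U x.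

Lemma specializes_closure (x y : X) :
  specializes x y <-> closure X open (fun z => z = x) y.
Proof.
  split.
  - intros Hxy G HG Hx. apply NNPP. intro Gy. exact (Hxy _ HG Gy (Hx x eq_refl)).
  - intros Hcl U HU Uy. apply NNPP. intro nUx.
    apply (Hcl _ (closed_compl U HU)); [intros z ->; exact nUx | exact Uy].
Qed.

Definition T0 : Prop := forall x y, specializes x y -> specializes y x -> x = y.

Lemma sober_of_generic_points : T0 ->
  (forall F, closed X open F -> irreducible X open F ->
     exists x, F x /\ forall y, F y -> specializes x y) ->
  sober X open.
Proof.
  intros HT0 Hgen F HF Hirr. destruct (Hgen F HF Hirr) as [x [Fx Hx]].
  assert (HFx : forall y, F y <-> closure X open (fun z => z = x) y).
  { intro y. rewrite <- specializes_closure. split; [apply Hx|].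
    intro Hxy. apply NNPP. intro nFy. exact (Hxy _ HF nFy Fx). }
  exists x. split; [exact HFx|]. intros x' Hx'.
  assert (Fx' : F x') by (apply Hx'; intros G _ HG; apply HG; reflexivity).
  apply HT0; [exact (Hx x' Fx') | exact (proj2 (specializes_closure x' x) (proj1 (Hx' x) Fx))].
Qed.

End GeneralTopology.

Section SpectralSpace.

Variable A : CstarAlg.

Lemma open_star_ext (U V : Sigma A -> Prop) :
  (forall z, U z <-> V z) -> open_star U -> open_star V.
Proof.
  intros He [H1 H2]. split.
  - intros C l Hl. apply He in Hl. destruct (H1 C l Hl) as [xs [eps [Heps Hm]]].
    exists xs, eps. split; [exact Heps|]. intros m Hm'. apply He. auto.
  - intros C C' l l' Hl Hle Hr. apply He. apply He in Hl. eauto.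
Qed.

Lemma open_above (D : CSub A) : open_star (fun s : Sigma A => csub_le A D (projT1 s)).
Proof.
  split.
  - intros C l Hl. exists nil, 1. split; [lra|]. intros m _. exact Hl.
  - intros C C' l l' Hl Hle _ x hx. simpl in *. auto.
Qed.

Lemma open_eval (z : A) (P : Cx -> Prop) : Cx_open P ->
  open_star (fun s : Sigma A =>
    exists h : mem A (projT1 s) z, P (ev A (projT1 s) (projT2 s) (exist _ z h))).
Proof.
  intro HP. split.
  - intros C l [h Hh]. simpl in h, Hh. destruct (HP _ Hh) as [eps [Heps Hw]].
    exists (exist _ z h :: nil), eps. split; [exact Heps|]. intros m Hm. exists h.
    apply Hw, Hm. left. reflexivity.
  - intros C C' l l' [h Hh] Hle Hr. simpl in *. exists (Hle z h).
    rewrite (Hr z h (Hle z h)). exact Hh.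
Qed.

Lemma separate_values (C D : CSub A) (l : Spec A C) (mu : Spec A D) (z : A)
    (hC : mem A C z) (hD : mem A D z) :
  ev A C l (exist _ z hC) <> ev A D mu (exist _ z hD) ->
  exists U V, open_star U /\ open_star V /\ U (existT _ C l) /\ V (existT _ D mu) /\
    forall s, U s -> V s -> False.
Proof.
  intro Hne. destruct (Cx_separate _ _ Hne) as [P1 [P2 [HP1 [HP2 [H1 [H2 Hdisj]]]]]].
  exists (fun s : Sigma A =>
    exists h : mem A (projT1 s) z, P1 (ev A (projT1 s) (projT2 s) (exist _ z h))).
  exists (fun s : Sigma A =>
    exists h : mem A (projT1 s) z, P2 (ev A (projT1 s) (projT2 s) (exist _ z h))).
  split; [apply open_eval, HP1|]. split; [apply open_eval, HP2|].
  split; [exists hC; exact H1|]. split; [exists hD; exact H2|].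
  intros s [h1 U1] [h2 U2]. rewrite (proof_irrelevance _ h2 h1) in U2. eauto.
Qed.

Lemma spec_ext (C : CSub A) (l l' : Spec A C) :
  (forall x, ev A C l x = ev A C l' x) -> l = l'.
Proof.
  destruct l as [f hf], l' as [g hg]. unfold ev; simpl. intro H.
  assert (f = g) by (apply functional_extensionality; auto). subst g.
  f_equal. apply proof_irrelevance.
Qed.

Lemma Sigma_T0 : T0 (Sigma A) (@open_star A).
Proof.
  intros [C l] [C' l'] H1 H2.
  assert (HC : C = C').
  { apply csub_ext; [apply (H2 _ (open_above C)) | apply (H1 _ (open_above C'))];
      intros z hz; exact hz. }
  subst C'. f_equal. apply spec_ext. intros [z hz]. apply NNPP. intro Hne.
  destruct (separate_values C C l l' z hz hz Hne) as [U [V [HU [HV [Ul [Vl' Hdisj]]]]]].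
  exact (Hdisj _ Ul (H1 V HV Vl')).
Qed.

Section GenericPoint.

Variables (F : Sigma A -> Prop) (C : CSub A) (l : Spec A C).
Hypotheses (F_irr : irreducible (Sigma A) (@open_star A) F) (F_l : F (existT _ C l))
  (C_max : forall E nu, F (existT _ E nu) -> csub_le A C E -> csub_le A E C).

Lemma irreducible_below_max (D : CSub A) (mu : Spec A D) :
  F (existT _ D mu) -> csub_le A D C.
Proof.
  intro Fmu.
  destruct (irreducible_meet _ _ (@open_star_ext) F _ _ F_irr (open_above C) (open_above D))
    as [[E nu] [FE [HCE HDE]]];
    [exists (existT _ C l); split; [exact F_l | intros x hx; exact hx]
    |exists (existT _ D mu); split; [exact Fmu | intros x hx; exact hx] |].
  simpl in HCE, HDE. intros x hx. exact (C_max E nu FE HCE x (HDE x hx)).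
Qed.

Lemma irreducible_max_restricts (D : CSub A) (mu : Spec A D) :
  F (existT _ D mu) -> restricts A l mu.
Proof.
  intros Fmu z hz hz'. apply NNPP. intro Hne.
  destruct (separate_values C D l mu z hz' hz Hne) as [U [V [HU [HV [Ul [Vmu Hdisj]]]]]].
  destruct (irreducible_meet _ _ (@open_star_ext) F U V F_irr HU HV) as [s [_ [Us Vs]]];
    eauto.
Qed.

Lemma irreducible_max_generic (D : CSub A) (mu : Spec A D) :
  F (existT _ D mu) -> specializes (Sigma A) (@open_star A) (existT _ C l) (existT _ D mu).
Proof.
  intros Fmu U [_ HU] Umu.
  exact (HU D C mu l Umu (irreducible_below_max D mu Fmu) (irreducible_max_restricts D mu Fmu)).
Qed.

End GenericPoint.

Lemma sober_of_ACC : ACC_CA A -> sober (Sigma A) (@open_star A).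
Proof.
  intro Hacc. apply sober_of_generic_points; [exact (@open_star_ext) | exact Sigma_T0 |].
  intros F _ Firr. destruct (proj1 Firr) as [[C0 l0] F0].
  destruct (acc_maximal (CSub A) (csub_le A) (fun C x hx => hx) Hacc
              (fun C => exists l, F (existT _ C l))) as [C [[l Fl] Cmax]]; [eauto|].
  exists (existT _ C l). split; [exact Fl|].
  intros [D mu] Fmu. apply (irreducible_max_generic F C l); auto.
  intros E nu FE. apply Cmax. eauto.
Qed.

End SpectralSpace.

Theorem theorem2p25 (A : CstarAlg) :
  (ACC_CA A -> sober (Sigma A) (@open_star A)) /\ (finite_dim A -> sober (Sigma A) (@open_star A)).
Proof.
  split; intro H; apply sober_of_ACC; [exact H | exact (finite_dim_ACC A H)].
Qed.
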